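(* Let $\chi,a,b,\lambda,\mu$ be positive constants with $b>2\chi\mu$. Consider the system \[ \begin{cases} \phi''-\chi(\phi\psi')'+\phi(a-b\phi)=0, & x\in\mathbb{R},\\ \psi''-\lambda\psi+\mu\phi=0, & x\in\mathbb{R}. \end{cases} \] Then $(\phi,\psi)\equiv\left(\frac{a}{b},\frac{a\mu}{b\lambda}\right)$ is the unique solution of this system with $\phi,\psi\in C^b_{\rm unif}(\mathbb{R})$ and $\inf_{x\in\mathbb{R}}\phi(x)>0$.
   Context: $C^b_{\rm unif}(\mathbb{R})$ denotes the space of bounded, uniformly continuous real functions on $\mathbb{R}$. *)

From Stdlib Require Import Reals.
From Coquelicot Require Import Coquelicot.
Open Scope R_scope.

Definition bounded_unif_cont (f : R -> R) : Prop :=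
  (exists M : R, forall x : R, Rabs (f x) <= M) /\
  (forall eps : R, 0 < eps -> exists delta : R, 0 < delta /\
     forall x y : R, Rabs (x - y) < delta -> Rabs (f x - f y) < eps).

Definition is_solution (chi a b lambda mu : R) (phi psi : R -> R) : Prop :=
  (forall x : R, ex_derive phi x /\ ex_derive (Derive phi) x) /\
  (forall x : R, ex_derive psi x /\ ex_derive (Derive psi) x) /\
  (forall x : R,
     Derive (Derive phi) x
     - chi * Derive (fun y => phi y * Derive psi y) x
     + phi x * (a - b * phi x) = 0) /\
  (forall x : R,
     Derive (Derive psi) x - lambda * psi x + mu * phi x = 0).

From Stdlib Require Import Reals Lra Psatz FunctionalExtensionality.
From Coquelicot Require Import Coquelicot.
Open Scope R_scope.

(* Proof idea.  phi and psi need not attain their extrema, so we use an approximate maximum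
   principle: maximizing f - e sqrt (1 + x^2) gives points where a bounded C^2 function f is
   e-close to its supremum with |f'| <= e and f'' <= e.  On the second equation this yields
   mu inf phi <= lambda psi <= mu sup phi.  Using psi'' = lambda psi - mu phi, the first equation
   reads phi'' - chi phi' psi' + phi (a - chi lambda psi - (b - chi mu) phi) = 0; since psi' is
   bounded and phi >= delta > 0, it yields (b - chi mu) sup phi <= a - chi mu inf phi and
   (b - chi mu) inf phi >= a - chi mu sup phi.  Subtracting, (b - 2 chi mu) (sup phi - inf phi)
   <= 0, so phi is constant, and then so is psi. *)

Definition bracket (x : R) : R := sqrt (1 + x ^ 2).

Lemma bracket_ge_1 (x : R) : 1 <= bracket x.
Proof. rewrite <- sqrt_1. apply sqrt_le_1_alt. nra. Qed.

Lemma Rabs_le_bracket (x : R) : Rabs x <= bracket x.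
Proof. rewrite <- sqrt_Rsqr_abs. apply sqrt_le_1_alt. unfold Rsqr. nra. Qed.

Lemma bracket_sqr (x : R) : bracket x * bracket x = 1 + x ^ 2.
Proof. apply sqrt_sqrt. nra. Qed.

Lemma is_derive_bracket (x : R) : is_derive bracket x (x / bracket x).
Proof.
  pose proof (bracket_ge_1 x). unfold bracket in *.
  auto_derive; replace (x * (x * 1)) with (x ^ 2) by ring; [nra|]. field. lra.
Qed.

Lemma is_derive_bracket_deriv (x : R) :
  is_derive (fun y => y / bracket y) x (/ bracket x ^ 3).
Proof.
  pose proof (bracket_ge_1 x). pose proof (bracket_sqr x). unfold bracket in *.
  auto_derive; replace (x * (x * 1)) with (x ^ 2) by ring; [repeat split; nra || lra|].
  set (s := sqrt (1 + x ^ 2)) in *.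
  field_simplify; [|lra..]. f_equal. nra.
Qed.

Lemma Rabs_bracket_deriv_le_1 (x : R) : Rabs (x / bracket x) <= 1.
Proof.
  pose proof (bracket_ge_1 x). pose proof (Rabs_le_bracket x).
  rewrite Rabs_div, (Rabs_right (bracket x)) by lra.
  apply Rle_div_l; lra.
Qed.

Lemma bracket_deriv2_le_1 (x : R) : / bracket x ^ 3 <= 1.
Proof.
  pose proof (bracket_ge_1 x) as H1.
  rewrite <- Rinv_1. apply Rinv_le_contravar; [lra|].
  pose proof (pow_R1_Rle (bracket x) 3 H1). lra.
Qed.

Lemma is_derive_max_eq_0 (f : R -> R) (x l : R) :
  (forall y, f y <= f x) -> is_derive f x l -> l = 0.
Proof.
  intros Hmax Hd. apply is_derive_Reals in Hd.
  rewrite <- (derive_pt_eq_0 f x l (exist _ l Hd) Hd).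
  apply (deriv_maximum f (x - 1) (x + 1)); [lra | lra | intros; apply Hmax].
Qed.

Lemma is_derive_pos_incr_right (g : R -> R) (x l : R) :
  is_derive g x l -> 0 < l -> exists d, 0 < d /\ forall h, 0 < h < d -> g x < g (x + h).
Proof.
  intros Hd Hl. apply is_derive_Reals in Hd.
  destruct (Hd l Hl) as [d Hd'].
  exists d. split; [apply cond_pos|]. intros h Hh.
  specialize (Hd' h ltac:(lra) ltac:(rewrite Rabs_right; lra)).
  apply Rabs_def2 in Hd'.
  assert (Hq : g (x + h) - g x = (g (x + h) - g x) / h * h) by (field; lra).
  nra.
Qed.

Lemma is_derive_max_deriv2_nonpos (f f' : R -> R) (x l : R) :
  (forall y, f y <= f x) -> (forall y, is_derive f y (f' y)) -> is_derive f' x l -> l <= 0.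
Proof.
  intros Hmax Hf Hf'.
  pose proof (is_derive_max_eq_0 f x (f' x) Hmax (Hf x)) as Hcrit.
  destruct (Rle_or_lt l 0) as [Hl | Hl]; [exact Hl | exfalso].
  destruct (is_derive_pos_incr_right f' x l Hf' Hl) as [d [Hd Hinc]].
  destruct (MVT_cor2 f f' x (x + d / 2)) as [c [Hc Hcx]];
    [lra | intros; apply is_derive_Reals, Hf |].
  specialize (Hinc (c - x) ltac:(lra)). replace (x + (c - x)) with c in Hinc by ring.
  specialize (Hmax (x + d / 2)). nra.
Qed.

Lemma coercive_attains_max (z : R -> R) (K e : R) : 0 < e ->
  (forall y, continuity_pt z y) -> (forall y, z y <= K - e * Rabs y) ->
  exists x, forall y, z y <= z x.
Proof.
  intros He Hc Hb.
  set (r := Rabs ((K - z 0) / e)).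
  assert (Hr : K - z 0 <= e * r).
  { replace (K - z 0) with (e * ((K - z 0) / e)) at 1 by (field; lra).
    apply Rmult_le_compat_l; [lra | apply Rle_abs]. }
  assert (Hr0 : 0 <= r) by apply Rabs_pos.
  destruct (continuity_ab_maj z (- r) r) as [x [Hx _]]; [lra | intros; apply Hc |].
  exists x. intros y. destruct (Rle_or_lt (Rabs y) r) as [Hy | Hy].
  - apply Hx, Rabs_le_between, Hy.
  - assert (z 0 <= z x) by (apply Hx; lra).
    specialize (Hb y). nra.
Qed.

(* [f - e * bracket] tends to -oo, so it attains its maximum; [x1] is that maximum point. *)
Lemma approx_max (f f' f'' : R -> R) (K e x0 : R) : 0 < e ->
  (forall x, is_derive f x (f' x)) -> (forall x, is_derive f' x (f'' x)) ->
  (forall x, f x <= K) ->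
  exists x1, f x0 <= f x1 + e * bracket x0 /\ Rabs (f' x1) <= e /\ f'' x1 <= e.
Proof.
  intros He Hf Hf' HK.
  set (z := fun x => f x - e * bracket x).
  set (z' := fun x => f' x - e * (x / bracket x)).
  assert (Hz : forall x, is_derive z x (z' x)).
  { intros x.
    exact (is_derive_minus _ _ x _ _ (Hf x) (is_derive_scal _ x e _ (is_derive_bracket x))). }
  assert (Hz' : forall x, is_derive z' x (f'' x - e * / bracket x ^ 3)).
  { intros x.
    exact (is_derive_minus _ _ x _ _ (Hf' x)
             (is_derive_scal _ x e _ (is_derive_bracket_deriv x))). }
  destruct (coercive_attains_max z K e He) as [x1 Hx1].
  { intros y. apply derivable_continuous_pt. exists (z' y). apply is_derive_Reals, Hz. }
  { intros y. unfold z. pose proof (HK y). pose proof (Rabs_le_bracket y). nra. }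
  pose proof (is_derive_max_eq_0 z x1 _ Hx1 (Hz x1)) as Hcrit.
  pose proof (is_derive_max_deriv2_nonpos z z' x1 _ Hx1 Hz (Hz' x1)) as Hconc.
  unfold z' in Hcrit. exists x1. split; [|split].
  - specialize (Hx1 x0). unfold z in Hx1. pose proof (bracket_ge_1 x1). nra.
  - replace (f' x1) with (e * (x1 / bracket x1)) by lra.
    rewrite Rabs_mult, (Rabs_right e) by lra.
    pose proof (Rabs_bracket_deriv_le_1 x1). nra.
  - pose proof (bracket_deriv2_le_1 x1). nra.
Qed.

Lemma le_of_approx_max (f f' f'' : R -> R) (k S C : R) :
  (forall x, is_derive f x (f' x)) -> (forall x, is_derive f' x (f'' x)) ->
  (exists K, forall x, f x <= K) -> 0 < k -> 0 <= C ->
  (forall e x, 0 < e -> Rabs (f' x) <= e -> f'' x <= e -> k * f x <= S + e * C) ->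
  forall x, k * f x <= S.
Proof.
  intros Hf Hf' [K HK] Hk HC Happrox x0.
  set (D := C + k * bracket x0).
  assert (HD : 0 < D) by (pose proof (bracket_ge_1 x0); unfold D; nra).
  apply Rle_plus_epsilon. intros eps Heps.
  assert (Ht : 0 < eps / D) by (apply Rdiv_lt_0_compat; lra).
  destruct (approx_max f f' f'' K (eps / D) x0 Ht Hf Hf' HK) as [x1 [Hx1 [H1 H2]]].
  specialize (Happrox _ x1 Ht H1 H2).
  assert (Heps_eq : eps = eps / D * C + eps / D * (k * bracket x0))
    by (rewrite <- Rmult_plus_distr_l; fold D; field; lra).
  nra.
Qed.

Lemma ge_of_approx_min (f f' f'' : R -> R) (k S C : R) :
  (forall x, is_derive f x (f' x)) -> (forall x, is_derive f' x (f'' x)) ->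
  (exists K, forall x, K <= f x) -> 0 < k -> 0 <= C ->
  (forall e x, 0 < e -> Rabs (f' x) <= e -> - e <= f'' x -> S - e * C <= k * f x) ->
  forall x, S <= k * f x.
Proof.
  intros Hf Hf' [K HK] Hk HC Happrox x.
  enough (k * - f x <= - S) by lra.
  apply (le_of_approx_max (fun y => - f y) (fun y => - f' y) (fun y => - f'' y) k (- S) C); auto.
  - intros y. exact (is_derive_opp _ y _ (Hf y)).
  - intros y. exact (is_derive_opp _ y _ (Hf' y)).
  - exists (- K). intros y. specialize (HK y). lra.
  - intros e y He H1 H2. rewrite Rabs_Ropp in H1.
    specialize (Happrox e y He H1 ltac:(lra)). lra.
Qed.

Lemma Rabs_deriv_le_of_Rabs_deriv2_le (f f' f'' : R -> R) (K L : R) :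
  (forall x, is_derive f x (f' x)) -> (forall x, is_derive f' x (f'' x)) ->
  (forall x, Rabs (f x) <= K) -> (forall x, Rabs (f'' x) <= L) ->
  forall x, Rabs (f' x) <= 2 * K + L.
Proof.
  intros Hf Hf' HK HL x.
  destruct (MVT_cor2 f f' x (x + 1)) as [c [Hc Hcx]];
    [lra | intros; apply is_derive_Reals, Hf |].
  destruct (MVT_cor2 f' f'' x c) as [d [Hd Hdx]];
    [lra | intros; apply is_derive_Reals, Hf' |].
  pose proof (proj1 (Rabs_le_between _ _) (HK x)).
  pose proof (proj1 (Rabs_le_between _ _) (HK (x + 1))).
  pose proof (proj1 (Rabs_le_between _ _) (HL d)).
  apply Rabs_le_between. nra.
Qed.

Lemma bounded_above_of_Rabs_bounded (f : R -> R) :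
  (exists K, forall x, Rabs (f x) <= K) -> exists K, forall x, f x <= K.
Proof.
  intros [K HK]. exists K. intros x.
  exact (Rle_trans _ _ _ (Rle_abs _) (HK x)).
Qed.

Lemma bounded_below_of_Rabs_bounded (f : R -> R) :
  (exists K, forall x, Rabs (f x) <= K) -> exists K, forall x, K <= f x.
Proof.
  intros [K HK]. exists (- K). intros x.
  pose proof (proj1 (Rabs_le_between _ _) (HK x)). lra.
Qed.

Lemma ex_sup_fun (f : R -> R) : (exists K, forall x, f x <= K) ->
  exists M, (forall x, f x <= M) /\ (forall c, (forall x, f x <= c) -> M <= c).
Proof.
  intros [K HK].
  destruct (completeness (fun y => exists x, y = f x)) as [M [HM1 HM2]].
  - exists K. intros y [x ->]. apply HK.
  - exists (f 0), 0. reflexivity.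
  - exists M. split.
    + intros x. apply HM1. exists x. reflexivity.
    + intros c Hc. apply HM2. intros y [x ->]. apply Hc.
Qed.

Lemma ex_inf_fun (f : R -> R) : (exists K, forall x, K <= f x) ->
  exists m, (forall x, m <= f x) /\ (forall c, (forall x, c <= f x) -> c <= m).
Proof.
  intros [K HK].
  destruct (ex_sup_fun (fun x => - f x)) as [M [HM1 HM2]].
  - exists (- K). intros x. specialize (HK x). lra.
  - exists (- M). split.
    + intros x. specialize (HM1 x). lra.
    + intros c Hc. enough (M <= - c) by lra. apply HM2. intros x. specialize (Hc x). lra.
Qed.

Lemma Rle_of_mul_le_lb (p q r d : R) : 0 < d <= p -> 0 <= r -> p * q <= r * d -> q <= r.
Proof. intros Hd Hr Hpq. destruct (Rle_or_lt q 0); nra. Qed.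

Lemma is_solution_const (chi a b lambda mu p q : R) :
  p * (a - b * p) = 0 -> lambda * q = mu * p ->
  is_solution chi a b lambda mu (fun _ => p) (fun _ => q).
Proof.
  intros Hp Hq.
  assert (D0 : forall c, Derive (fun _ : R => c) = fun _ => 0).
  { intros c. apply functional_extensionality. intros. apply Derive_const. }
  repeat split; intros; rewrite ?D0, ?Derive_const; first [apply ex_derive_const | lra].
Qed.

Section Uniqueness.

Variables (chi a b lambda mu : R) (phi psi : R -> R).
Hypotheses (Hchi : 0 < chi) (Hlambda : 0 < lambda) (Hmu : 0 < mu) (Hbig : 2 * chi * mu < b).
Hypothesis Hsol : is_solution chi a b lambda mu phi psi.
Hypotheses (Hphi_bd : exists K, forall x, Rabs (phi x) <= K)
  (Hpsi_bd : exists K, forall x, Rabs (psi x) <= K).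
Variable delta : R.
Hypotheses (Hdelta : 0 < delta) (Hphi_ge_delta : forall x, delta <= phi x).

Lemma is_derive_phi (x : R) : is_derive phi x (Derive phi x).
Proof. apply Derive_correct, (proj1 Hsol). Qed.

Lemma is_derive_phi' (x : R) : is_derive (Derive phi) x (Derive (Derive phi) x).
Proof. apply Derive_correct, (proj1 Hsol). Qed.

Lemma is_derive_psi (x : R) : is_derive psi x (Derive psi x).
Proof. apply Derive_correct, (proj1 (proj2 Hsol)). Qed.

Lemma is_derive_psi' (x : R) : is_derive (Derive psi) x (Derive (Derive psi) x).
Proof. apply Derive_correct, (proj1 (proj2 Hsol)). Qed.

Lemma psi_eq (x : R) : Derive (Derive psi) x = lambda * psi x - mu * phi x.
Proof. pose proof (proj2 (proj2 (proj2 Hsol)) x). lra. Qed.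

Lemma phi_eq (x : R) :
  phi x * (a - chi * lambda * psi x - (b - chi * mu) * phi x)
  = chi * (Derive phi x * Derive psi x) - Derive (Derive phi) x.
Proof.
  destruct Hsol as [Hphi [Hpsi [E1 _]]].
  specialize (E1 x). rewrite Derive_mult, psi_eq in E1 by (apply Hphi || apply Hpsi).
  lra.
Qed.

Lemma Derive_psi_bounded : exists P, forall x, Rabs (Derive psi x) <= P.
Proof.
  destruct Hphi_bd as [Kp HKp], Hpsi_bd as [Kq HKq].
  exists (2 * Kq + (lambda * Kq + mu * Kp)).
  apply (Rabs_deriv_le_of_Rabs_deriv2_le _ _ _ _ _ is_derive_psi is_derive_psi' HKq).
  intros x. rewrite psi_eq.
  pose proof (proj1 (Rabs_le_between _ _) (HKp x)).
  pose proof (proj1 (Rabs_le_between _ _) (HKq x)).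
  apply Rabs_le_between. nra.
Qed.

Lemma chemotaxis_term_small : exists C, 0 <= C /\ forall e x,
  Rabs (Derive phi x) <= e -> Rabs (chi * (Derive phi x * Derive psi x)) <= e * C.
Proof.
  destruct Derive_psi_bounded as [P HP].
  exists (chi * P). split.
  - pose proof (Rabs_pos (Derive psi 0)). specialize (HP 0). nra.
  - intros e x He. rewrite !Rabs_mult, (Rabs_right chi) by lra.
    assert (Rabs (Derive phi x) * Rabs (Derive psi x) <= e * P)
      by (apply Rmult_le_compat; auto using Rabs_pos).
    nra.
Qed.

Lemma lambda_psi_le (M : R) : (forall x, phi x <= M) -> forall x, lambda * psi x <= mu * M.
Proof.
  intros HM.
  apply (le_of_approx_max _ _ _ _ _ 1 is_derive_psi is_derive_psi'
           (bounded_above_of_Rabs_bounded _ Hpsi_bd)); [lra | lra |].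
  intros e x He _ H2. rewrite psi_eq in H2. specialize (HM x). nra.
Qed.

Lemma lambda_psi_ge (m : R) : (forall x, m <= phi x) -> forall x, mu * m <= lambda * psi x.
Proof.
  intros Hm.
  apply (ge_of_approx_min _ _ _ _ _ 1 is_derive_psi is_derive_psi'
           (bounded_below_of_Rabs_bounded _ Hpsi_bd)); [lra | lra |].
  intros e x He _ H2. rewrite psi_eq in H2. specialize (Hm x). nra.
Qed.

Lemma phi_le (m : R) : (forall x, m <= phi x) ->
  forall x, (b - chi * mu) * phi x <= a - chi * mu * m.
Proof.
  intros Hm. destruct chemotaxis_term_small as [C [HC Hsmall]].
  apply (le_of_approx_max _ _ _ _ _ ((1 + C) / delta) is_derive_phi is_derive_phi'
           (bounded_above_of_Rabs_bounded _ Hphi_bd)); [nra | apply Rdiv_le_0_compat; lra |].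
  intros e x He H1 H2.
  pose proof (proj1 (Rabs_le_between _ _) (Hsmall e x H1)).
  assert (Hrem : - (a - chi * lambda * psi x - (b - chi * mu) * phi x)
                 <= e * ((1 + C) / delta)).
  { apply (Rle_of_mul_le_lb (phi x) _ _ delta);
      [auto | apply Rmult_le_pos, Rdiv_le_0_compat; lra |].
    replace (e * ((1 + C) / delta) * delta) with (e * (1 + C)) by (field; lra).
    pose proof (phi_eq x). nra. }
  pose proof (lambda_psi_ge m Hm x). nra.
Qed.

Lemma phi_ge (M : R) : (forall x, phi x <= M) ->
  forall x, a - chi * mu * M <= (b - chi * mu) * phi x.
Proof.
  intros HM. destruct chemotaxis_term_small as [C [HC Hsmall]].
  apply (ge_of_approx_min _ _ _ _ _ ((1 + C) / delta) is_derive_phi is_derive_phi'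
           (ex_intro _ delta Hphi_ge_delta)); [nra | apply Rdiv_le_0_compat; lra |].
  intros e x He H1 H2.
  pose proof (proj1 (Rabs_le_between _ _) (Hsmall e x H1)).
  assert (Hrem : a - chi * lambda * psi x - (b - chi * mu) * phi x <= e * ((1 + C) / delta)).
  { apply (Rle_of_mul_le_lb (phi x) _ _ delta);
      [auto | apply Rmult_le_pos, Rdiv_le_0_compat; lra |].
    replace (e * ((1 + C) / delta) * delta) with (e * (1 + C)) by (field; lra).
    pose proof (phi_eq x). nra. }
  pose proof (lambda_psi_le M HM x). nra.
Qed.

Lemma phi_const (x : R) : phi x = a / b.
Proof.
  destruct (ex_sup_fun phi (bounded_above_of_Rabs_bounded _ Hphi_bd)) as [M [HM HMleast]].
  destruct (ex_inf_fun phi (ex_intro _ delta Hphi_ge_delta)) as [m [Hm Hmgreatest]].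
  assert (HB : 0 < b - chi * mu) by nra.
  assert (Hsup : M * (b - chi * mu) <= a - chi * mu * m).
  { apply Rle_div_r; [exact HB|]. apply HMleast. intros y.
    apply Rle_div_r; [exact HB|]. rewrite (Rmult_comm (phi y)). exact (phi_le m Hm y). }
  assert (Hinf : a - chi * mu * M <= m * (b - chi * mu)).
  { apply Rle_div_l; [exact HB|]. apply Hmgreatest. intros y.
    apply Rle_div_l; [exact HB|]. rewrite (Rmult_comm (phi y)). exact (phi_ge M HM y). }
  assert (HmM : m <= M) by (specialize (Hm 0); specialize (HM 0); lra).
  assert (HMm : M = m) by nra.
  assert (HbM : b * M = a) by (subst; nra).
  specialize (Hm x). specialize (HM x).
  rewrite <- HbM. field_simplify; nra.
Qed.

Lemma psi_const (x : R) : psi x = a * mu / (b * lambda).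
Proof.
  pose proof (lambda_psi_le (a / b) ltac:(intros y; rewrite phi_const; lra) x).
  pose proof (lambda_psi_ge (a / b) ltac:(intros y; rewrite phi_const; lra) x).
  apply (Rmult_eq_reg_l lambda); [|lra].
  replace (lambda * (a * mu / (b * lambda))) with (mu * (a / b)) by (field; nra).
  lra.
Qed.

End Uniqueness.

Theorem lemma2p2 (chi a b lambda mu : R)
  (Hchi : 0 < chi) (Ha : 0 < a) (Hb : 0 < b) (Hlambda : 0 < lambda) (Hmu : 0 < mu)
  (Hbig : b > 2 * chi * mu) :
  is_solution chi a b lambda mu (fun _ => a / b) (fun _ => a * mu / (b * lambda)) /\
  (forall phi psi : R -> R,
     is_solution chi a b lambda mu phi psi ->
     bounded_unif_cont phi -> bounded_unif_cont psi ->
     (exists delta : R, 0 < delta /\ forall x : R, delta <= phi x) ->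
     (forall x : R, phi x = a / b /\ psi x = a * mu / (b * lambda))).
Proof.
  split.
  - apply is_solution_const; field; lra.
  - intros phi psi Hsol [Hphi_bd _] [Hpsi_bd _] [delta [Hdelta Hphi_ge]] x.
    split; [eapply (phi_const chi a b lambda mu phi psi)
           | eapply (psi_const chi a b lambda mu phi psi)]; eassumption.
Qed.
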